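(* Let $W$ be a real symmetric $n\times n$ matrix with non-negative entries $w_{i,j}$ and zero diagonal, let $\lambda\ge 0$, and let $z\in\mathbb{C}^n$. If $$\lambda\,\Bigl(\max_{i}\sum_{j\neq i} w_{i,j}\Bigr) < 1,$$ then the function $x\mapsto D_{\lambda,W}(x;z)$ is strictly convex on $\mathbb{C}^n$ (viewed as $\mathbb{R}^{2n}$). In particular, it has a unique minimizer.
   Context: For $x\in\mathbb{C}^n$, $|x|$ denotes the vector of magnitudes $(|x_1|,\dots,|x_n|)$ and $\|x\|_1=\sum_i |x_i|$. The penalty is $P_W(x)=\|x\|_1+\frac12\sum_{i,j} w_{i,j}|x_i x_j| = \|x\|_1+\frac12|x|^T W|x|$. For $\lambda\ge0$ and $z\in\mathbb{C}^n$, $D_{\lambda,W}(x;z)=\frac12\|z-x\|_2^2+\lambda P_W(x)$. $\mathbb{C}^n$ is identified with $\mathbb{R}^{2n}$, with inner product $\langle x,y\rangle=\sum_i \mathrm{Re}(x_i \overline{y_i})$. *)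

From Stdlib Require Import Reals.
From mathcomp Require Import all_boot.
Set Implicit Arguments.
Unset Strict Implicit.
Open Scope R_scope.

(* A complex number is represented by its (real part, imaginary part);
   C^n is identified with R^(2n) via these coordinates. *)
Definition cvec (n : nat) := 'I_n -> (R * R)%type.

Definition cmod (z : (R * R)%type) : R := sqrt (fst z * fst z + snd z * snd z).

Definition rsum (n : nat) (f : 'I_n -> R) : R := \big[Rplus/0]_(i < n) f i.

Definition norm1 (n : nat) (x : cvec n) : R := rsum (fun i => cmod (x i)).

Definition PW (n : nat) (W : 'I_n -> 'I_n -> R) (x : cvec n) : R :=
  norm1 x + / 2 * rsum (fun i => rsum (fun j => W i j * (cmod (x i) * cmod (x j)))).

Definition dist2 (n : nat) (z x : cvec n) : R :=
  rsum (fun i => (fst (z i) - fst (x i)) ^ 2 + (snd (z i) - snd (x i)) ^ 2).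

Definition D (n : nat) (lam : R) (W : 'I_n -> 'I_n -> R) (x z : cvec n) : R :=
  / 2 * dist2 z x + lam * PW W x.

Definition cvcomb (n : nat) (t : R) (x y : cvec n) : cvec n :=
  fun i => (t * fst (x i) + (1 - t) * fst (y i), t * snd (x i) + (1 - t) * snd (y i)).

Definition strictly_convex (n : nat) (f : cvec n -> R) : Prop :=
  forall (x y : cvec n) (t : R), x <> y -> 0 < t < 1 ->
    f (cvcomb t x y) < t * f x + (1 - t) * f y.

Definition is_minimizer (n : nat) (f : cvec n -> R) (x : cvec n) : Prop :=
  forall y : cvec n, f x <= f y.

(* max_i sum_{j <> i} w_{i,j}  (0 for n = 0; entries are nonnegative) *)
Definition max_offdiag_rowsum (n : nat) (W : 'I_n -> 'I_n -> R) : R :=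
  \big[Rmax/0]_(i < n) (\big[Rplus/0]_(j < n | j != i) W i j).

(* Put r := max_i sum_(j <> i) w_ij.  The data term is 1-strongly convex and the
   l1 term is convex.  The coupling term is not convex, but the reverse triangle
   inequality | |u| - |v| | <= |u - v| bounds its defect at a pair (i, j) by
   w_ij (|x_i - y_i|^2 + |x_j - y_j|^2) / 2, and summing over the symmetric W
   bounds the total defect by r |x - y|^2.  Hence D is (1 - lam r)-strongly
   convex, so strictly convex; and strong convexity at midpoints makes every
   minimizing sequence Cauchy, whose limit is the minimizer. *)
From HB Require Import structures.
From Stdlib Require Import Reals Lra Psatz Classical ClassicalEpsilon FunctionalExtensionality.
From mathcomp Require Import all_boot.
Set Implicit Arguments.
Unset Strict Implicit.
Open Scope R_scope.

Lemma Rplus_associative : associative Rplus. Proof. by move=> a b c; ring. Qed.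
HB.instance Definition _ :=
  Monoid.isComLaw.Build R 0 Rplus Rplus_associative Rplus_comm Rplus_0_l.

Section FiniteSums.
Variable n : nat.
Implicit Types f g : 'I_n -> R.

Lemma rsum_ext f g : (forall i, f i = g i) -> rsum f = rsum g.
Proof. by move=> H; apply: eq_bigr => i _. Qed.

Lemma rsum_plus f g : rsum (fun i => f i + g i) = rsum f + rsum g.
Proof. exact: big_split. Qed.

Lemma rsum_scal c f : rsum (fun i => c * f i) = c * rsum f.
Proof.
apply: (big_rec2 (fun a b => a = c * b)); first by ring.
by move=> i a b _ ->; ring.
Qed.

Lemma rsum_le f g : (forall i, f i <= g i) -> rsum f <= rsum g.
Proof.
move=> H; apply: (big_rec2 (fun a b => a <= b)); first lra.
by move=> i a b _ Hab; have := H i; lra.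
Qed.

Lemma rsum_ge0 f : (forall i, 0 <= f i) -> 0 <= rsum f.
Proof.
move=> H; apply: (big_rec (fun a => 0 <= a)) => [|i a _ Ha]; first lra.
by have := H i; lra.
Qed.

Lemma rsum_term_le f i : (forall j, 0 <= f j) -> f i <= rsum f.
Proof.
move=> H; rewrite /rsum (bigD1 i) //=.
have : 0 <= \big[Rplus/0]_(j < n | j != i) f j.
  by apply: (big_rec (fun a => 0 <= a)) => [|j a _ Ha]; [lra | have := H j; lra].
by move=> ?; rewrite -{1}[f i]Rplus_0_r; apply: Rplus_le_compat_l.
Qed.

Lemma rsum_exch (F : 'I_n -> 'I_n -> R) :
  rsum (fun i => rsum (F i)) = rsum (fun j => rsum (fun i => F i j)).
Proof. exact: exchange_big. Qed.

End FiniteSums.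

Lemma Rmax_big_ge n (g : 'I_n -> R) i : g i <= \big[Rmax/0]_(k < n) g k.
Proof.
have : i \in index_enum 'I_n by rewrite mem_index_enum.
elim: (index_enum 'I_n) => [|a s IH] //=.
rewrite inE big_cons => /orP [/eqP <-|Hs]; first exact: Rmax_l.
exact: Rle_trans (IH Hs) (Rmax_r _ _).
Qed.

Lemma rowsum_le_max_offdiag n (W : 'I_n -> 'I_n -> R) :
  (forall i, W i i = 0) -> forall i, rsum (W i) <= max_offdiag_rowsum W.
Proof.
move=> Wdiag i; rewrite /rsum (bigD1 i) //= Wdiag Rplus_0_l.
exact: (Rmax_big_ge (fun i => \big[Rplus/0]_(j < n | j != i) W i j)).
Qed.

Definition sqdist (u v : R * R) : R := (fst u - fst v) ^ 2 + (snd u - snd v) ^ 2.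

Lemma dist2E n (x y : cvec n) : dist2 x y = rsum (fun i => sqdist (x i) (y i)).
Proof. by []. Qed.

Lemma sqdist_ge0 u v : 0 <= sqdist u v.
Proof. by rewrite /sqdist; have := pow2_ge_0 (fst u - fst v); have := pow2_ge_0 (snd u - snd v); lra. Qed.

Lemma cmod_ge0 u : 0 <= cmod u.
Proof. exact: sqrt_pos. Qed.

Lemma cmod_sqr u : cmod u * cmod u = fst u * fst u + snd u * snd u.
Proof. by rewrite /cmod sqrt_sqrt //; nra. Qed.

Lemma dot_le_cmod u v : fst u * fst v + snd u * snd v <= cmod u * cmod v.
Proof.
have hu := cmod_sqr u; have hv := cmod_sqr v.
have lagrange : (fst u * fst v + snd u * snd v) ^ 2 <= (cmod u * cmod v) ^ 2.
  have -> : (cmod u * cmod v) ^ 2 = (cmod u * cmod u) * (cmod v * cmod v) by ring.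
  by rewrite hu hv; have := pow2_ge_0 (fst u * snd v - snd u * fst v); move=> *; nra.
have := Rmult_le_pos _ _ (cmod_ge0 u) (cmod_ge0 v); move=> *; nra.
Qed.

Lemma cmod_convex t u v : 0 <= t <= 1 ->
  cmod (t * fst u + (1 - t) * fst v, t * snd u + (1 - t) * snd v)
  <= t * cmod u + (1 - t) * cmod v.
Proof.
move=> Ht; set w := (_, _); set m := t * cmod u + (1 - t) * cmod v.
have hw := cmod_sqr w; rewrite /w /= in hw.
have hu := cmod_sqr u; have hv := cmod_sqr v; have huv := dot_le_cmod u v.
have hu0 := cmod_ge0 u; have hv0 := cmod_ge0 v.
have ht : 0 <= t * (1 - t) by nra.
have sqr_le : cmod w * cmod w <= m * m.
  have -> : m * m = t * t * (cmod u * cmod u) + (1 - t) * (1 - t) * (cmod v * cmod v)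
                    + 2 * (t * (1 - t)) * (cmod u * cmod v) by rewrite /m; ring.
  by rewrite hw hu hv; nra.
have : 0 <= m by rewrite /m; nra.
have := cmod_ge0 w; move=> *; nra.
Qed.

Lemma cmod_diff_sqr_le u v : (cmod u - cmod v) ^ 2 <= sqdist u v.
Proof. by rewrite /sqdist; have := cmod_sqr u; have := cmod_sqr v; have := dot_le_cmod u v; move=> *; nra. Qed.

Section Distance.
Variable n : nat.
Implicit Types x y z : cvec n.

Lemma dist2_ge0 x y : 0 <= dist2 x y.
Proof. by apply: rsum_ge0 => i; apply: sqdist_ge0. Qed.

Lemma dist2_coord_le x y i :
  (fst (x i) - fst (y i)) ^ 2 <= dist2 x y /\ (snd (x i) - snd (y i)) ^ 2 <= dist2 x y.
Proof.
have := rsum_term_le i (fun j => sqdist_ge0 (x j) (y j)); rewrite -dist2E /sqdist.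
by have := pow2_ge_0 (fst (x i) - fst (y i)); have := pow2_ge_0 (snd (x i) - snd (y i)); lra.
Qed.

Lemma dist2_pos x y : x <> y -> 0 < dist2 x y.
Proof.
move=> Hxy; case: (Rle_lt_dec (dist2 x y) 0) => // Hle; exfalso; apply: Hxy.
apply: functional_extensionality => i; have [h1 h2] := dist2_coord_le x y i.
rewrite [x i]surjective_pairing [y i]surjective_pairing.
by congr pair; apply: Rle_antisym; nra.
Qed.

Lemma dist2_cvcomb t x y z :
  dist2 z (cvcomb t x y) + t * (1 - t) * dist2 x y = t * dist2 z x + (1 - t) * dist2 z y.
Proof.
rewrite /dist2 -!rsum_scal -!rsum_plus; apply: rsum_ext => i.
by rewrite /cvcomb /=; ring.
Qed.

End Distance.

Lemma prod_convex_defect t a b c e p q di dj : 0 <= t <= 1 -> 0 <= p -> 0 <= q ->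
  p <= t * a + (1 - t) * c -> q <= t * b + (1 - t) * e ->
  (a - c) ^ 2 <= di -> (b - e) ^ 2 <= dj ->
  p * q <= t * (a * b) + (1 - t) * (c * e) + t * (1 - t) * ((di + dj) / 2).
Proof.
move=> Ht hp hq Hp Hq Hdi Hdj.
have hpq : p * q <= (t * a + (1 - t) * c) * (t * b + (1 - t) * e) by apply: Rmult_le_compat.
have -> : t * (a * b) + (1 - t) * (c * e)
          = (t * a + (1 - t) * c) * (t * b + (1 - t) * e) + t * (1 - t) * ((a - c) * (b - e))
  by ring.
have amgm : - (a - c) * (b - e) <= ((a - c) ^ 2 + (b - e) ^ 2) / 2
  by have := pow2_ge_0 (a - c + (b - e)); lra.
have : 0 <= t * (1 - t) by nra.
move=> *; nra.
Qed.

Section Penalty.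
Variables (n : nat) (W : 'I_n -> 'I_n -> R) (r : R).
Hypothesis W_ge0 : forall i j, 0 <= W i j.
Hypothesis W_sym : forall i j, W i j = W j i.
Hypothesis W_rowsum : forall i, rsum (W i) <= r.
Implicit Types x y z : cvec n.

Definition qform (x : cvec n) : R :=
  rsum (fun i => rsum (fun j => W i j * (cmod (x i) * cmod (x j)))).

Lemma PWE x : PW W x = norm1 x + / 2 * qform x.
Proof. by []. Qed.

Lemma qform_ge0 x : 0 <= qform x.
Proof.
apply: rsum_ge0 => i; apply: rsum_ge0 => j.
by apply: Rmult_le_pos => //; apply: Rmult_le_pos; apply: cmod_ge0.
Qed.

Lemma rsum_sym_avg (d : 'I_n -> R) :
  rsum (fun i => rsum (fun j => W i j * ((d i + d j) / 2))) = rsum (fun i => d i * rsum (W i)).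
Proof.
have -> : rsum (fun i => rsum (fun j => W i j * ((d i + d j) / 2)))
  = / 2 * rsum (fun i => rsum (fun j => d i * W i j))
    + / 2 * rsum (fun i => rsum (fun j => W i j * d j)).
  rewrite -!rsum_scal -rsum_plus; apply: rsum_ext => i.
  by rewrite -!rsum_scal -rsum_plus; apply: rsum_ext => j; field.
rewrite [X in _ + / 2 * X]rsum_exch.
have -> : rsum (fun j => rsum (fun i => W i j * d j)) = rsum (fun j => d j * rsum (W j)).
  by apply: rsum_ext => j; rewrite -rsum_scal; apply: rsum_ext => i; rewrite W_sym; ring.
under [rsum (fun i => rsum _)]rsum_ext => i do rewrite rsum_scal.
field.
Qed.

Lemma rsum_rowsum_le (d : 'I_n -> R) :
  (forall i, 0 <= d i) -> rsum (fun i => d i * rsum (W i)) <= r * rsum d.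
Proof.
move=> d_ge0; rewrite -rsum_scal; apply: rsum_le => i.
by have := d_ge0 i; have := W_rowsum i; nra.
Qed.

Lemma qform_convex_defect t x y : 0 <= t <= 1 ->
  qform (cvcomb t x y) <= t * qform x + (1 - t) * qform y + t * (1 - t) * (r * dist2 x y).
Proof.
move=> Ht; set d := fun i => sqdist (x i) (y i).
have pairwise : forall i j,
    W i j * (cmod (cvcomb t x y i) * cmod (cvcomb t x y j))
    <= t * (W i j * (cmod (x i) * cmod (x j))) + (1 - t) * (W i j * (cmod (y i) * cmod (y j)))
       + t * (1 - t) * (W i j * ((d i + d j) / 2)).
  move=> i j; have := W_ge0 i j; have := @prod_convex_defect t (cmod (x i)) (cmod (x j))
    (cmod (y i)) (cmod (y j)) (cmod (cvcomb t x y i)) (cmod (cvcomb t x y j)) (d i) (d j) Ht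
    (cmod_ge0 _) (cmod_ge0 _) (cmod_convex _ _ Ht) (cmod_convex _ _ Ht)
    (cmod_diff_sqr_le _ _) (cmod_diff_sqr_le _ _).
  move=> *; nra.
apply: Rle_trans (rsum_le (fun i => rsum_le (pairwise i))) _.
have -> : forall A B C : 'I_n -> 'I_n -> R,
    rsum (fun i => rsum (fun j => t * A i j + (1 - t) * B i j + t * (1 - t) * C i j))
    = t * rsum (fun i => rsum (A i)) + (1 - t) * rsum (fun i => rsum (B i))
      + t * (1 - t) * rsum (fun i => rsum (C i)).
  move=> A B C; rewrite -!rsum_scal -!rsum_plus; apply: rsum_ext => i.
  by rewrite -!rsum_scal -!rsum_plus; apply: rsum_ext => j.
rewrite rsum_sym_avg; apply: Rplus_le_compat_l; apply: Rmult_le_compat_l; first nra.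
by rewrite dist2E; apply: rsum_rowsum_le => i; apply: sqdist_ge0.
Qed.

Lemma norm1_convex t x y : 0 <= t <= 1 ->
  norm1 (cvcomb t x y) <= t * norm1 x + (1 - t) * norm1 y.
Proof.
move=> Ht; rewrite /norm1 -!rsum_scal -rsum_plus.
by apply: rsum_le => i; apply: cmod_convex.
Qed.

Lemma PW_convex_defect t x y : 0 <= t <= 1 ->
  PW W (cvcomb t x y) <= t * PW W x + (1 - t) * PW W y + t * (1 - t) * (r / 2 * dist2 x y).
Proof.
move=> Ht; rewrite !PWE.
by have := norm1_convex x y Ht; have := qform_convex_defect x y Ht; move=> *; nra.
Qed.

Lemma D_ge0 lam x z : 0 <= lam -> 0 <= D lam W x z.
Proof.
move=> lam_ge0; rewrite /D PWE.
have : 0 <= norm1 x by apply: rsum_ge0 => i; apply: cmod_ge0.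
have := dist2_ge0 z x; have := qform_ge0 x; move=> *; nra.
Qed.

End Penalty.

(* In the usual convention [f (t x + (1-t) y) <= ... - mu/2 t (1-t) |x-y|^2] the modulus is [2 kap]. *)
Definition strongly_convex n (kap : R) (f : cvec n -> R) : Prop :=
  forall t x y, 0 <= t <= 1 ->
    f (cvcomb t x y) + t * (1 - t) * kap * dist2 x y <= t * f x + (1 - t) * f y.

Lemma strongly_convex_strictly_convex n kap (f : cvec n -> R) :
  0 < kap -> strongly_convex kap f -> strictly_convex f.
Proof.
move=> kap_gt0 f_sc x y t Hxy Ht; have := f_sc t x y ltac:(lra).
have : 0 < t * (1 - t) * kap * dist2 x y.
  by apply: Rmult_lt_0_compat; [apply: Rmult_lt_0_compat; nra | exact: dist2_pos].
lra.
Qed.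

Lemma D_strongly_convex n (W : 'I_n -> 'I_n -> R) r lam z :
  (forall i j, 0 <= W i j) -> (forall i j, W i j = W j i) -> (forall i, rsum (W i) <= r) ->
  0 <= lam -> strongly_convex ((1 - lam * r) / 2) (fun x => D lam W x z).
Proof.
move=> W_ge0 W_sym W_rowsum lam_ge0 t x y Ht; rewrite /D.
have := dist2_cvcomb t x y z.
have := Rmult_le_compat_l lam _ _ lam_ge0 (PW_convex_defect W_ge0 W_sym W_rowsum x y Ht).
move=> *; nra.
Qed.

Definition cvec_cv n (xs : nat -> cvec n) (x : cvec n) : Prop :=
  forall i, Un_cv (fun k => fst (xs k i)) (fst (x i)) /\ Un_cv (fun k => snd (xs k i)) (snd (x i)).

Lemma Un_cv_const c : Un_cv (fun _ => c) c.
Proof. by move=> eps He; exists 0%nat => k _; rewrite /Rdist Rminus_diag Rabs_R0. Qed.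

Lemma Un_cv_sqr (u : nat -> R) a : Un_cv u a -> Un_cv (fun k => u k ^ 2) (a ^ 2).
Proof.
move=> H; have -> : a ^ 2 = a * a by ring.
by apply: (Un_cv_ext (fun k => u k * u k)) => [k|]; [ring | exact: CV_mult].
Qed.

Lemma rsum_cv n (F : nat -> 'I_n -> R) (l : 'I_n -> R) :
  (forall i, Un_cv (fun k => F k i) (l i)) -> Un_cv (fun k => rsum (F k)) (rsum l).
Proof.
elim: n F l => [|n IH] F l H.
  rewrite {2}/rsum big_ord0.
  by apply: (Un_cv_ext (fun _ => 0)) => [k|]; [rewrite /rsum big_ord0 | apply: Un_cv_const].
rewrite {2}/rsum big_ord_recr.
apply: (Un_cv_ext (fun k => rsum (fun i => F k (widen_ord (leqnSn n) i)) + F k ord_max)).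
  by move=> k; rewrite /rsum big_ord_recr.
exact: CV_plus (IH _ _ (fun i => H _)) (H ord_max).
Qed.

Lemma cmod_cv (u : nat -> R * R) a :
  Un_cv (fun k => fst (u k)) (fst a) -> Un_cv (fun k => snd (u k)) (snd a) ->
  Un_cv (fun k => cmod (u k)) (cmod a).
Proof.
move=> H1 H2; apply: continuity_seq (CV_plus _ _ _ _ (CV_mult _ _ _ _ H1 H1) (CV_mult _ _ _ _ H2 H2)).
by apply: continuity_pt_sqrt; nra.
Qed.

Lemma D_continuous n lam (W : 'I_n -> 'I_n -> R) z xs x :
  cvec_cv xs x -> Un_cv (fun k => D lam W (xs k) z) (D lam W x z).
Proof.
move=> Hx.
have cmod_xs i : Un_cv (fun k => cmod (xs k i)) (cmod (x i)) by case: (Hx i); apply: cmod_cv.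
have Hdist : Un_cv (fun k => dist2 z (xs k)) (dist2 z x).
  apply: rsum_cv => i; case: (Hx i) => H1 H2.
  by apply: CV_plus; apply: Un_cv_sqr; apply: CV_minus => //; apply: Un_cv_const.
have Hqform : Un_cv (fun k => qform W (xs k)) (qform W x).
  apply: rsum_cv => i; apply: rsum_cv => j.
  by apply: CV_mult; [apply: Un_cv_const | apply: CV_mult].
apply: CV_plus; apply: CV_mult; try apply: Un_cv_const; first exact: Hdist.
apply: CV_plus; first exact: rsum_cv.
by apply: CV_mult; [apply: Un_cv_const | exact: Hqform].
Qed.

Lemma exists_inf_approx (T : Type) (f : T -> R) (m : R) (x0 : T) :
  (forall x, m <= f x) ->
  exists mu, (forall x, mu <= f x) /\ forall e, 0 < e -> exists x, f x < mu + e.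
Proof.
move=> f_lb.
have [L [L_ub L_lub]] : {L | is_lub (fun v => exists x, v = - f x) L}.
  apply: completeness; first by exists (- m) => v [x ->]; have := f_lb x; lra.
  by exists (- f x0), x0.
exists (- L); split=> [x|e He].
  by have := L_ub (- f x) (ex_intro _ x erefl); lra.
apply: NNPP => Hnot; have : L <= L - e; last lra.
apply: L_lub => v [x ->]; have : ~ f x < - L + e by move=> h; apply: Hnot; exists x.
lra.
Qed.

Lemma Rinv_INR_succ_le N k : (0 < N)%coq_nat -> (N <= k)%coq_nat -> / (INR k + 1) <= / INR N.
Proof.
move=> /lt_0_INR N_gt0 /le_INR Hk.
by apply: Rinv_le_contravar => //; lra.
Qed.

Lemma Un_cv_inv_succ : Un_cv (fun k => / (INR k + 1)) 0.
Proof.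
move=> eps eps_gt0; have [N [HN N_gt0]] := archimed_cor1 _ eps_gt0.
exists N => k Hk; rewrite /Rdist Rminus_0_r Rabs_pos_eq.
  by have := Rinv_INR_succ_le N_gt0 Hk; lra.
by apply: Rlt_le; apply: Rinv_0_lt_compat; have := pos_INR k; lra.
Qed.

Lemma dist2_Cauchy_cv n (xs : nat -> cvec n) :
  (forall eps, 0 < eps -> exists N, forall k l, (N <= k)%coq_nat -> (N <= l)%coq_nat ->
     dist2 (xs k) (xs l) < eps ^ 2) ->
  exists x, cvec_cv xs x.
Proof.
move=> xs_Cauchy.
have coord_Cauchy (g : nat -> R) :
    (forall k l, (g k - g l) ^ 2 <= dist2 (xs k) (xs l)) -> Cauchy_crit g.
  move=> Hg eps eps_gt0; have [N HN] := xs_Cauchy eps eps_gt0.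
  exists N => k l Hk Hl; have := Hg k l; have := HN k l Hk Hl.
  by rewrite /Rdist => *; apply: Rabs_def1; nra.
have C1 i := coord_Cauchy _ (fun k l => proj1 (dist2_coord_le (xs k) (xs l) i)).
have C2 i := coord_Cauchy _ (fun k l => proj2 (dist2_coord_le (xs k) (xs l) i)).
exists (fun i => (sval (R_complete _ (C1 i)), sval (R_complete _ (C2 i)))) => i /=.
by split; apply: svalP.
Qed.

Section StronglyConvexMinimizer.
Variables (n : nat) (f : cvec n -> R) (m kap : R).
Hypothesis f_lb : forall x, m <= f x.
Hypothesis kap_gt0 : 0 < kap.
Hypothesis f_sc : strongly_convex kap f.
Hypothesis f_cont : forall xs x, cvec_cv xs x -> Un_cv (fun k => f (xs k)) (f x).

Lemma strongly_convex_minimizer : exists x, is_minimizer f x.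
Proof.
have [mu [mu_lb mu_inf]] := exists_inf_approx (fun _ => (0, 0)) f_lb.
have [xs xs_min] : exists xs : nat -> cvec n, forall k, f (xs k) < mu + / (INR k + 1).
  apply: (ClassicalEpsilon.choice (fun k x => f x < mu + / (INR k + 1))) => k.
  apply: mu_inf.
  by apply: Rinv_0_lt_compat; have := pos_INR k; lra.
have near_min_close e a b : f a < mu + e -> f b < mu + e -> kap * dist2 a b < 4 * e.
  by have := f_sc (t := / 2) a b ltac:(lra); have := mu_lb (cvcomb (/ 2) a b); lra.
have [x xs_cv] : exists x, cvec_cv xs x.
  apply: dist2_Cauchy_cv => eps eps_gt0.
  have [N [HN N_gt0]] := archimed_cor1 (kap * eps ^ 2 / 4) ltac:(have := pow_lt _ 2 eps_gt0; nra).
  have tail k : (N <= k)%coq_nat -> f (xs k) < mu + kap * eps ^ 2 / 4.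
    by move=> Hk; have := xs_min k; have := Rinv_INR_succ_le N_gt0 Hk; lra.
  exists N => k l Hk Hl; have := near_min_close _ _ _ (tail k Hk) (tail l Hl).
  by move=> Hkl; apply: (Rmult_lt_reg_l kap) => //; lra.
exists x => y; apply: Rle_trans _ (mu_lb y).
apply: (Rle_cv_lim (fun k => Rlt_le _ _ (xs_min k)) (f_cont xs_cv)).
by have := CV_plus _ _ _ _ (Un_cv_const mu) Un_cv_inv_succ; rewrite Rplus_0_r.
Qed.

End StronglyConvexMinimizer.

Lemma strictly_convex_minimizer_unique n (f : cvec n -> R) x y :
  strictly_convex f -> is_minimizer f x -> is_minimizer f y -> y = x.
Proof.
move=> f_strict x_min y_min; apply: NNPP => Hyx.
have := f_strict y x (/ 2) Hyx ltac:(lra).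
by have := x_min (cvcomb (/ 2) y x); have := y_min x; lra.
Qed.

Theorem proposition1 (n : nat) (W : 'I_n -> 'I_n -> R) (lam : R) (z : cvec n)
  (HWsym : forall i j, W i j = W j i)
  (HWnn : forall i j, 0 <= W i j)
  (HWdiag : forall i, W i i = 0)
  (Hlam : 0 <= lam)
  (Hcond : lam * max_offdiag_rowsum W < 1) :
  strictly_convex (fun x => D lam W x z) /\
  (exists x : cvec n, is_minimizer (fun y => D lam W y z) x /\
     forall y : cvec n, is_minimizer (fun y => D lam W y z) y -> y = x).
Proof.
have kap_gt0 : 0 < (1 - lam * max_offdiag_rowsum W) / 2 by lra.
have D_sc := D_strongly_convex z HWnn HWsym (rowsum_le_max_offdiag HWdiag) Hlam.
have D_strict := strongly_convex_strictly_convex kap_gt0 D_sc.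
split=> //.
have [x x_min] := strongly_convex_minimizer (fun x => D_ge0 HWnn x z Hlam) kap_gt0 D_sc
  (@D_continuous _ lam W z).
exists x; split=> // y y_min.
exact: strictly_convex_minimizer_unique D_strict x_min y_min.
Qed.
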